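(* Under the hypotheses of the setting below, the functions $\Phi=\varphi\Delta^{-1}=W\{\varphi\}C^{-1}$ and $\Psi=\psi(\Delta^{-1})^\top=(W^{-1})^\tau\{\psi\}(C^\top)^{-1}$ satisfy $$\hat L_{k,l}\{\Phi\}+c_l(\hat M_n)^{l+1}\{\Phi\}=0,\qquad \hat L_{k,l}^\tau\{\Psi\}+c_l(\hat M_n^\tau)^{l+1}\{\Psi\}=0,$$ where $\hat L_{k,l}=WL_{k,l}W^{-1}$ and $\hat M_n=WM_nW^{-1}$.
   Context: $D=\partial/\partial x$. Operators are formal matrix pseudodifferential operators in $D$ whose coefficients are $N\times N$ matrix functions of $x$ and $t_n$; they may also contain $\partial_{t_n}$, which commutes with $D$. $P\{f\}$ is the action on $f$, with $D^{-1}$ a fixed $x$-antiderivative commuting with $\partial_{t_n}$. The formal transpose $P^\tau$ is the anti-automorphism with $(fD^i)^\tau=(-1)^iD^if^\top$, $\partial_{t_n}^\tau=-\partial_{t_n}$, $(PQ)^\tau=Q^\tau P^\tau$. Setting. Data: $k,n\in\mathbb N$; $l\ge0$; $c_l,\alpha_n\in\mathbb C$; $\mathcal J_k,\tilde{\mathcal J}_n$ commuting constant $N\times N$ matrices; $u_j,v_i$ are $N\times N$ matrix functions; $\mathbf q,\mathbf r$ are $N\times m$ matrix functions; $\mathcal M_0$ is a constant $m\times m$ matrix. Operators: $$M_n=\alpha_n\partial_{t_n}-\tilde{\mathcal J}_nD^n-\sum_{i=0}^{n-1}v_iD^i-\mathbf q\mathcal M_0D^{-1}\mathbf r^\top,$$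 $$L_{k,l}=\mathcal J_kD^k+\sum_{j=0}^{k-1}u_jD^j+c_l\sum_{j=0}^l\mathbf q[j]\mathcal M_0D^{-1}\mathbf r^\top[l-j],$$ with $\mathbf q[j]=M_n^j\{\mathbf q\}$ and $\mathbf r^\top[j]=((M_n^\tau)^j\{\mathbf r\})^\top$. Hypotheses: $N\times K$ matrix functions $\varphi,\psi$ satisfy $M_n\{\varphi\}=\varphi\Lambda$, $M_n^\tau\{\psi\}=\psi\tilde\Lambda$, $L_{k,l}\{\varphi\}=-c_l\varphi\Lambda^{l+1}$ and $L^\tau_{k,l}\{\psi\}=-c_l\psi\tilde\Lambda^{l+1}$, where $\Lambda,\tilde\Lambda$ are constant $K\times K$ matrices. $C$ is a constant invertible $K\times K$ matrix, $\Delta=C+D^{-1}\{\psi^\top\varphi\}$, $W=I-\varphi\Delta^{-1}D^{-1}\psi^\top$, and $W^{-1}=I+\varphi D^{-1}\Delta^{-1}\psi^\top$.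
   Formalization: The fixed x-antiderivative $D^{-1}$ is a base-point one: f ↦ f − $D^{-1}${Df} is multiplicative on scalar functions, as for the integral from x₀ to x. The statement above fails without it. *)

From HB Require Import structures.
From mathcomp Require Import all_boot all_order all_algebra.
Set Implicit Arguments. Unset Strict Implicit. Unset Printing Implicit Defensive.
Import GRing.Theory.
Local Open Scope ring_scope.

Section Ops.
Variables (F : fieldType) (A : comUnitAlgType F).

(* Syntax of (matrix) operators in D, D^{-1}, d/dt_n.
   [op a b] maps matrix functions with a rows to matrix functions with b rows
   (any number of columns). *)
Inductive op : nat -> nat -> Type :=
| OMul a b : 'M[A]_(b, a) -> op a b
| ODx a : op a a
| ODinv a : op a a
| ODt a : op a a
| OScale a b : F -> op a b -> op a b
| OAdd a b : op a b -> op a b -> op a b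
| OComp a b c : op b c -> op a b -> op a c.   (* P Q  (Q acts first) *)

Fixpoint otr a b (P : op a b) : op b a :=
  match P in op a b return op b a with
  | OMul _ _ f => OMul f^T
  | ODx a => OScale (-1) (ODx a)
  | ODinv a => OScale (-1) (ODinv a)
  | ODt a => OScale (-1) (ODt a)
  | OScale _ _ c P => OScale c (otr P)
  | OAdd _ _ P Q => OAdd (otr P) (otr Q)
  | OComp _ _ _ P Q => OComp (otr Q) (otr P)
  end.

Definition oid a : op a a := OMul (1%:M).
Definition ozero a b : op a b := OMul 0.
Definition osub a b (P Q : op a b) : op a b := OAdd P (OScale (-1) Q).
Fixpoint opow a (P : op a a) (j : nat) : op a a :=
  if j is j'.+1 then OComp P (opow P j') else oid a.
Fixpoint osum a b (n : nat) (G : nat -> op a b) : op a b :=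
  if n is n'.+1 then OAdd (osum n' G) (G n') else ozero a b.

Variables (Dx Dt Dinv : A -> A).

Fixpoint act a b (P : op a b) (p : nat) : 'M[A]_(a, p) -> 'M[A]_(b, p) :=
  match P in op a b return 'M[A]_(a, p) -> 'M[A]_(b, p) with
  | OMul _ _ f => fun g => f *m g
  | ODx _ => fun g => map_mx Dx g
  | ODinv _ => fun g => map_mx Dinv g
  | ODt _ => fun g => map_mx Dt g
  | OScale _ _ c P => fun g => c%:A *: act P g
  | OAdd _ _ P Q => fun g => act P g + act Q g
  | OComp _ _ _ P Q => fun g => act P (act Q g)
  end.

End Ops.

(* constant matrices (entries in the field of constants F) as matrix functions *)
Definition cst (F : fieldType) (A : comUnitAlgType F) m n (X : 'M[F]_(m, n))
  : 'M[A]_(m, n) := map_mx (fun c => c%:A) X.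

(* The "base-point evaluation" attached to the antiderivative:
   ev f = f - D^{-1}{D f}  (for D^{-1} = int_{x0}^x this is f|_{x=x0}). *)
Definition evx (F : fieldType) (A : comUnitAlgType F) (Dx Dinv : A -> A) (f : A) : A :=
  f - Dinv (Dx f).

Definition Mop (F : fieldType) (A : comUnitAlgType F) (N m n : nat)
  (alpha : F) (Jt : 'M[F]_N) (v : nat -> 'M[A]_N) (q r : 'M[A]_(N, m))
  (M0 : 'M[F]_m) : op A N N :=
  osub (osub (osub (OScale alpha (ODt A N))
                   (OComp (OMul (cst A Jt)) (opow (ODx A N) n)))
             (osum n (fun i => OComp (OMul (v i)) (opow (ODx A N) i))))
       (OComp (OMul (q *m cst A M0)) (OComp (ODinv A m) (OMul r^T))).

(* The operator L_{k,l}, with q[j] = M^j{q}, r^T[j] = ((M^t)^j{r})^T *)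
Definition Lop (F : fieldType) (A : comUnitAlgType F) (Dx Dt Dinv : A -> A)
  (N m k l : nat) (c : F) (J : 'M[F]_N) (u : nat -> 'M[A]_N)
  (q r : 'M[A]_(N, m)) (M0 : 'M[F]_m) (M : op A N N) : op A N N :=
  OAdd (OAdd (OComp (OMul (cst A J)) (opow (ODx A N) k))
             (osum k (fun j => OComp (OMul (u j)) (opow (ODx A N) j))))
       (OScale c (osum l.+1 (fun j =>
          OComp (OMul (act Dx Dt Dinv (opow M j) q *m cst A M0))
            (OComp (ODinv A m)
               (OMul (act Dx Dt Dinv (opow (otr M) (l - j)%N) r)^T))))).

Definition Wop (F : fieldType) (A : comUnitAlgType F) (N K : nat)
  (phi psi : 'M[A]_(N, K)) (Delta : 'M[A]_K) : op A N N :=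
  osub (oid A N) (OComp (OMul (phi *m invmx Delta)) (OComp (ODinv A K) (OMul psi^T))).

Definition Winvop (F : fieldType) (A : comUnitAlgType F) (N K : nat)
  (phi psi : 'M[A]_(N, K)) (Delta : 'M[A]_K) : op A N N :=
  OAdd (oid A N) (OComp (OMul phi) (OComp (ODinv A K) (OMul (invmx Delta *m psi^T)))).

From HB Require Import structures.
From mathcomp Require Import all_boot all_order all_algebra.
Set Implicit Arguments. Unset Strict Implicit. Unset Printing Implicit Defensive.
Import GRing.Theory.
Local Open Scope ring_scope.

(* Write Delta = C + D^-1{psi^T phi}.  Two explicit computations carry the proof:
   - W{phi} = phi Delta^-1 C, because D^-1{psi^T phi} = Delta - C;
   - W^-1{phi Delta^-1} = phi C^-1, because psi^T phi = D(Delta), so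
     Delta^-1 psi^T phi Delta^-1 = -D(Delta^-1), and D^-1 D(Delta^-1) is Delta^-1
     minus its base-point value, which is C^-1.
   Hence Phi = phi Delta^-1 = W{phi} C^-1 and W^-1 W{phi} = phi.  Since every
   operator action commutes with right multiplication by constant matrices, a
   general conjugation argument turns the eigen-equations M{phi} = phi Lam and
   L{phi} = -c phi Lam^(l+1) into Lhat{Phi} + c Mhat^(l+1){Phi} = 0.  The
   transposed statement for Psi follows from the same lemmas applied to the data
   (psi, phi, C^T), since transposition exchanges W^-1 and W (with the roles of
   phi and psi swapped) and turns Delta into Delta^T. *)

Section ConstantMatrices.
Variables (F : fieldType) (A : comUnitAlgType F).

Lemma cstM m n p (X : 'M[F]_(m, n)) (Y : 'M[F]_(n, p)) :
  cst A (X *m Y) = cst A X *m cst A Y.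
Proof. exact: (map_mxM (in_alg A)). Qed.

Lemma cst_invmx n (X : 'M[F]_n) : cst A (invmx X) = invmx (cst A X).
Proof. exact: (map_invmx (in_alg A)). Qed.

Lemma map_mx_mul_cst (f : {linear A -> A}) m n p (g : 'M[A]_(m, n)) (X : 'M[F]_(n, p)) :
  map_mx f (g *m cst A X) = map_mx f g *m cst A X.
Proof.
apply/matrixP=> i j; rewrite !mxE raddf_sum; apply: eq_bigr => k _.
by rewrite !mxE !mulr_algr; exact: linearZ.
Qed.

Lemma cst_oppZ m n p (c : F) (g : 'M[A]_(m, n)) (X : 'M[F]_(n, p)) :
  - (c%:A *: (g *m cst A X)) = g *m cst A (- (c *: X)).
Proof.
rewrite scalemxAr -mulmxN; congr (g *m _).
by apply/matrixP=> i j; rewrite !mxE -scalerAl mul1r scaleNr scalerA.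
Qed.

Lemma cst1 n : cst A (1%:M : 'M[F]_n) = 1%:M.
Proof. exact: (map_mx1 (in_alg A)). Qed.

End ConstantMatrices.

Lemma map_invmx_rmorph (R S : comUnitRingType) (f : {rmorphism R -> S}) n (X : 'M[R]_n) :
  X \in unitmx -> map_mx f (invmx X) = invmx (map_mx f X).
Proof.
move=> uX; have inv_fX : map_mx f (invmx X) *m map_mx f X = 1%:M.
  by rewrite -map_mxM mulVmx // map_mx1.
have [_ ufX] := mulmx1_unit inv_fX.
by rewrite -[LHS]mulmx1 -(mulmxV ufX) mulmxA inv_fX mul1mx.
Qed.

Section Dressing.
Variables (F : fieldType) (A : comUnitAlgType F) (Dx Dt Dinv : A -> A).
Hypotheses (hDx_lin : forall (a : F) (f g : A), Dx (a *: f + g) = a *: Dx f + Dx g)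
  (hDt_lin : forall (a : F) (f g : A), Dt (a *: f + g) = a *: Dt f + Dt g)
  (hDinv_lin : forall (a : F) (f g : A), Dinv (a *: f + g) = a *: Dinv f + Dinv g)
  (hDx_mul : forall f g : A, Dx (f * g) = Dx f * g + f * Dx g)
  (hDinv_anti : forall f : A, Dx (Dinv f) = f)
  (hDinv_base : forall f g : A, evx Dx Dinv (f * g) = evx Dx Dinv f * evx Dx Dinv g).

HB.instance Definition _ := GRing.isLinear.Build F A A *:%R Dx hDx_lin.
HB.instance Definition _ := GRing.isLinear.Build F A A *:%R Dt hDt_lin.
HB.instance Definition _ := GRing.isLinear.Build F A A *:%R Dinv hDinv_lin.

Local Notation act := (act Dx Dt Dinv).

(* Every operator action commutes with right multiplication by constant
   matrices, since D, D^-1 and d/dt are F-linear. *)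
Lemma act_cst a b (P : op A a b) p p' (g : 'M[A]_(a, p)) (X : 'M[F]_(p, p')) :
  act P (g *m cst A X) = act P g *m cst A X.
Proof.
elim: P p p' g X => /= [? ? f | ? | ? | ? | ? ? c P IH | ? ? P IHP Q IHQ | ? ? ? P IHP Q IHQ]
  p p' g X.
- by rewrite mulmxA.
- exact: map_mx_mul_cst.
- exact: map_mx_mul_cst.
- exact: map_mx_mul_cst.
- by rewrite IH scalemxAl.
- by rewrite IHP IHQ mulmxDl.
- by rewrite IHQ IHP.
Qed.

Lemma Dx1 : Dx 1 = 0.
Proof.
have := hDx_mul 1 1; rewrite !mul1r mulr1 => e.
by apply: (addrI (Dx 1)); rewrite addr0 -e.
Qed.

Lemma map_Dx_cst m n (X : 'M[F]_(m, n)) : map_mx Dx (cst A X) = 0.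
Proof. by apply/matrixP=> i j; rewrite !mxE -[_%:A]/(_ *: 1) linearZ /= Dx1 scaler0. Qed.

Lemma map_Dx_mul m n p (X : 'M[A]_(m, n)) (Y : 'M[A]_(n, p)) :
  map_mx Dx (X *m Y) = map_mx Dx X *m Y + X *m map_mx Dx Y.
Proof.
apply/matrixP=> i j; rewrite !mxE raddf_sum -big_split /=.
by apply: eq_bigr => k _; rewrite !mxE hDx_mul.
Qed.

Lemma map_Dx_invmx n (X : 'M[A]_n) : X \in unitmx ->
  map_mx Dx (invmx X) = - (invmx X *m map_mx Dx X *m invmx X).
Proof.
move=> uX; have : map_mx Dx (X *m invmx X) = 0.
  by rewrite mulmxV // -(map_mx1 (in_alg A)) map_Dx_cst.
rewrite map_Dx_mul => /eqP; rewrite addr_eq0 => /eqP/(congr1 (mulmx (invmx X))).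
move=> e; rewrite mulmxN [X in _ = - X]mulmxA mulVmx // mul1mx in e.
by rewrite -mulmxA e opprK.
Qed.

Let ev := evx Dx Dinv.

Lemma ev_is_linear : forall (a : F) (f g : A), ev (a *: f + g) = a *: ev f + ev g.
Proof. by move=> a f g; rewrite /ev /evx hDx_lin hDinv_lin opprD scalerBr addrACA. Qed.
HB.instance Definition _ := GRing.isLinear.Build F A A *:%R ev ev_is_linear.

Lemma ev1 : ev 1 = 1.
Proof. by rewrite /ev /evx Dx1 linear0 subr0. Qed.
HB.instance Definition _ := GRing.isMonoidMorphism.Build A A ev (ev1, hDinv_base).

Lemma map_ev_cst m n (X : 'M[F]_(m, n)) : map_mx ev (cst A X) = cst A X.
Proof. by apply/matrixP=> i j; rewrite !mxE -[_%:A]/(_ *: 1) linearZ rmorph1. Qed.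

Lemma map_ev_Dinv m n (X : 'M[A]_(m, n)) : map_mx ev (map_mx Dinv X) = 0.
Proof. by apply/matrixP=> i j; rewrite !mxE /ev /evx hDinv_anti subrr. Qed.

Lemma map_Dinv_Dx m n (X : 'M[A]_(m, n)) :
  map_mx Dinv (map_mx Dx X) = X - map_mx ev X.
Proof. by apply/matrixP=> i j; rewrite !mxE /ev /evx opprB addrC subrK. Qed.

Lemma map_ev_invmx n (X : 'M[A]_n) :
  X \in unitmx -> map_mx ev (invmx X) = invmx (map_mx ev X).
Proof. exact: map_invmx_rmorph. Qed.

Definition Delta N K (phi psi : 'M[A]_(N, K)) (C : 'M[F]_K) : 'M[A]_K :=
  cst A C + map_mx Dinv (psi^T *m phi).

Lemma Delta_tr N K (phi psi : 'M[A]_(N, K)) (C : 'M[F]_K) :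
  (Delta phi psi C)^T = Delta psi phi C^T.
Proof. by rewrite /Delta linearD /= !map_trmx trmx_mul trmxK. Qed.

Lemma act_Wop N K p (phi psi : 'M[A]_(N, K)) (D : 'M[A]_K) (g : 'M[A]_(N, p)) :
  act (Wop phi psi D) g = g - phi *m invmx D *m map_mx Dinv (psi^T *m g).
Proof. by rewrite /= mul1mx !scaleN1r. Qed.

Lemma act_Winvop N K p (phi psi : 'M[A]_(N, K)) (D : 'M[A]_K) (g : 'M[A]_(N, p)) :
  act (Winvop phi psi D) g = g + phi *m map_mx Dinv (invmx D *m psi^T *m g).
Proof. by rewrite /= mul1mx. Qed.

Lemma act_otr_Wop N K p (phi psi : 'M[A]_(N, K)) (D : 'M[A]_K) (g : 'M[A]_(N, p)) :
  act (otr (Wop phi psi D)) g = act (Winvop psi phi D^T) g.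
Proof. by rewrite /= trmx1 !mul1mx !scaleN1r mulmxN opprK trmx_mul trmxK trmx_inv. Qed.

Lemma act_otr_Winvop N K p (phi psi : 'M[A]_(N, K)) (D : 'M[A]_K) (g : 'M[A]_(N, p)) :
  act (otr (Winvop phi psi D)) g = act (Wop psi phi D^T) g.
Proof. by rewrite /= trmx1 !mul1mx !scaleN1r mulmxN trmx_mul trmxK trmx_inv. Qed.

Section DressedEigenfunctions.
Variables (N K : nat) (phi psi : 'M[A]_(N, K)) (C : 'M[F]_K).
Hypotheses (hC : C \in unitmx) (hDelta : Delta phi psi C \in unitmx).
Local Notation Delta := (Delta phi psi C).

Lemma W_phi : act (Wop phi psi Delta) phi = phi *m invmx Delta *m cst A C.
Proof.
rewrite act_Wop.
have -> : map_mx Dinv (psi^T *m phi) = Delta - cst A C by rewrite addrC addKr.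
rewrite mulmxBr -[phi *m _ *m Delta]mulmxA mulVmx // mulmx1.
by rewrite opprB addrC subrK.
Qed.

Lemma Winv_Phi : act (Winvop phi psi Delta) (phi *m invmx Delta) = phi *m cst A (invmx C).
Proof.
have Dx_Delta : map_mx Dx Delta = psi^T *m phi.
  rewrite map_mxD map_Dx_cst add0r.
  by apply/matrixP=> i j; rewrite !mxE /= hDinv_anti.
have ev_Delta : map_mx ev Delta = cst A C.
  by rewrite map_mxD map_ev_cst map_ev_Dinv addr0.
rewrite act_Winvop.
have -> : invmx Delta *m psi^T *m (phi *m invmx Delta) = - map_mx Dx (invmx Delta).
  by rewrite map_Dx_invmx // Dx_Delta opprK !mulmxA.
rewrite map_mxN map_Dinv_Dx map_ev_invmx // ev_Delta -cst_invmx.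
by rewrite mulmxN mulmxBr opprB addrC subrK.
Qed.

Lemma Winv_W_phi : act (Winvop phi psi Delta) (act (Wop phi psi Delta) phi) = phi.
Proof. by rewrite W_phi act_cst Winv_Phi -mulmxA -cstM mulVmx // cst1 mulmx1. Qed.

Lemma Phi_dressed : phi *m invmx Delta = act (Wop phi psi Delta) phi *m cst A (invmx C).
Proof. by rewrite W_phi -mulmxA -cstM mulmxV // cst1 mulmx1. Qed.

End DressedEigenfunctions.

Section Conjugation.
Variables (a K : nat) (W Winv L M Lhat Mhat : op A a a) (phi : 'M[A]_(a, K)).
Variables (Lam : 'M[F]_K) (c : F) (l : nat).
Hypotheses (hLhat : forall g : 'M[A]_(a, K), act Lhat g = act W (act L (act Winv g)))
  (hMhat : forall g : 'M[A]_(a, K), act Mhat g = act W (act M (act Winv g)))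
  (hWinvW : act Winv (act W phi) = phi)
  (hM : act M phi = phi *m cst A Lam)
  (hL : act L phi = - (c%:A *: (phi *m cst A (Lam ^+ l.+1)))).

Lemma opow_Mhat_dressed j (X : 'M[F]_K) :
  act (opow Mhat j) (act W phi *m cst A X) = act W phi *m cst A (Lam ^+ j *m X).
Proof.
elim: j => [|j IH] /=; first by rewrite expr0 mul1mx mul1mx.
rewrite IH hMhat act_cst hWinvW act_cst hM -mulmxA -cstM act_cst.
by rewrite exprS mulmxA.
Qed.

Lemma dressed_equation (X : 'M[F]_K) :
  act Lhat (act W phi *m cst A X)
    + c%:A *: act (opow Mhat l.+1) (act W phi *m cst A X) = 0.
Proof.
rewrite opow_Mhat_dressed hLhat act_cst hWinvW act_cst hL cst_oppZ.
by rewrite -mulmxA -cstM act_cst mulNmx -scalemxAl -cst_oppZ addNr.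
Qed.

End Conjugation.

End Dressing.

Theorem corollary4
  (* constants field (C in the paper) and algebra of scalar functions of (x, t_n) *)
  (F : fieldType) (A : comUnitAlgType F)
  (* D = d/dx, d/dt_n, and the fixed antiderivative D^{-1} *)
  (Dx Dt Dinv : A -> A)
  (hDx_lin : forall (a : F) (f g : A), Dx (a *: f + g) = a *: Dx f + Dx g)
  (hDx_mul : forall f g : A, Dx (f * g) = Dx f * g + f * Dx g)
  (hDt_lin : forall (a : F) (f g : A), Dt (a *: f + g) = a *: Dt f + Dt g)
  (hDt_mul : forall f g : A, Dt (f * g) = Dt f * g + f * Dt g)
  (hDxDt : forall f : A, Dx (Dt f) = Dt (Dx f))
  (hDinv_lin : forall (a : F) (f g : A), Dinv (a *: f + g) = a *: Dinv f + Dinv g)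
  (hDinv_anti : forall f : A, Dx (Dinv f) = f)
  (hDinv_Dt : forall f : A, Dt (Dinv f) = Dinv (Dt f))
  (hDinv_base : forall f g : A,
      evx Dx Dinv (f * g) = evx Dx Dinv f * evx Dx Dinv g)
  (* data *)
  (N K m k n l : nat) (hk : (0 < k)%N) (hn : (0 < n)%N)
  (c alpha : F) (J Jt : 'M[F]_N) (hJ : J *m Jt = Jt *m J)
  (u v : nat -> 'M[A]_N) (q r : 'M[A]_(N, m)) (M0 : 'M[F]_m)
  (phi psi : 'M[A]_(N, K)) (Lam Lamt : 'M[F]_K) (C : 'M[F]_K)
  (hC : C \in unitmx)
  (hDelta : cst A C + map_mx Dinv (psi^T *m phi) \in unitmx) :
  let Mn := Mop n alpha Jt v q r M0 in
  let L := Lop Dx Dt Dinv k l c J u q r M0 Mn in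
  let Delta := cst A C + map_mx Dinv (psi^T *m phi) in
  let W := Wop phi psi Delta in
  let Winv := Winvop phi psi Delta in
  let Lhat := OComp W (OComp L Winv) in
  let Mhat := OComp W (OComp Mn Winv) in
  let Phi := phi *m invmx Delta in
  let Psi := psi *m (invmx Delta)^T in
  act Dx Dt Dinv Mn phi = phi *m cst A Lam ->
  act Dx Dt Dinv (otr Mn) psi = psi *m cst A Lamt ->
  act Dx Dt Dinv L phi = - (c%:A *: (phi *m cst A (Lam ^+ l.+1))) ->
  act Dx Dt Dinv (otr L) psi = - (c%:A *: (psi *m cst A (Lamt ^+ l.+1))) ->
  [/\ Phi = act Dx Dt Dinv W phi *m cst A (invmx C),
      Psi = act Dx Dt Dinv (otr Winv) psi *m cst A (invmx C^T),
      act Dx Dt Dinv Lhat Phi + c%:A *: act Dx Dt Dinv (opow Mhat l.+1) Phi = 0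
    & act Dx Dt Dinv (otr Lhat) Psi
        + c%:A *: act Dx Dt Dinv (opow (otr Mhat) l.+1) Psi = 0].
Proof.
move=> Mn L Delta0 W Winv Lhat Mhat Phi Psi hM hMt hL hLt.
have hCT : C^T \in unitmx by rewrite unitmx_tr.
have hDeltaT : Delta Dinv psi phi C^T \in unitmx by rewrite -Delta_tr unitmx_tr.
have Phi_eq : Phi = act Dx Dt Dinv W phi *m cst A (invmx C) by exact: Phi_dressed.
have Psi_eq : Psi = act Dx Dt Dinv (otr Winv) psi *m cst A (invmx C^T).
  by rewrite /Psi trmx_inv act_otr_Winvop Delta_tr; exact: Phi_dressed.
have WinvW : act Dx Dt Dinv Winv (act Dx Dt Dinv W phi) = phi by exact: Winv_W_phi.
have WinvW_tr : act Dx Dt Dinv (otr W) (act Dx Dt Dinv (otr Winv) psi) = psi.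
  by rewrite act_otr_Wop act_otr_Winvop Delta_tr; exact: Winv_W_phi.
split=> //.
- rewrite Phi_eq.
  by apply: (dressed_equation hDx_lin hDt_lin hDinv_lin _ _ WinvW hM hL).
- rewrite Psi_eq.
  by apply: (dressed_equation hDx_lin hDt_lin hDinv_lin _ _ WinvW_tr hMt hLt).
Qed.
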